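(* Let $G=(V(G),E(G))$ be a locally finite, connected weighted graph with the random walk $m^G$ and measure $\nu_G$ defined below, satisfying the standing assumptions below, and let $\Omega\subset V(G)$ be a finite set of vertices with $0<\nu_G(\Omega)<\nu_G(V(G))$. Then $(m^G,\nu_G)$ satisfies a $p$-Poincaré inequality in $\Omega$ for every $p\ge1$.
   Context: Each edge $x\sim y$ has a weight $w_{xy}=w_{yx}>0$, with $w_{xy}=0$ if $x,y$ are not adjacent; locally finite means every vertex has finitely many neighbours; $V(G)$ carries the shortest-path graph distance. $d_x:=\sum_{y\in V(G)}w_{xy}$, $m^G_x:=\frac{1}{d_x}\sum_{y\sim x}w_{xy}\delta_y$, $\nu_G(A):=\sum_{x\in A}d_x$; $\nu_G$ is invariant and reversible for $m^G$. Standing assumption: $\nu_G(V(G))<\infty$. With $m=m^G$, $\nu=\nu_G$: $\partial_m\Omega:=\{x\in V(G)\setminus\Omega: m_x(\Omega)>0\}$, $\Omega_m:=\Omega\cup\partial_m\Omega$; for $u:\Omega\to\mathbb{R}$ and $\psi$ on $\partial_m\Omega$, $u_\psi$ equals $u$ on $\Omega$ and $\psi$ on $\partial_m\Omega$. For $q\ge1$, $(m,\nu)$ satisfies a $q$-Poincaré inequality in $\Omega$ if there is $\lambda>0$ such that $\lambda\int_\Omega|u(x)|^q\,d\nu(x)\le\int_\Omega\int_{\Omega_m}|u_\psi(y)-u(x)|^q\,dm_x(y)\,d\nu(x)+\int_{\partial_m\Omega}|\psi(y)|^q\,d\nu(y)$ for all $u\in L^q(\Omega,\nu)$ and all $\psi\in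 L^q(\partial_m\Omega,\nu)$. *)

From Stdlib Require Import Reals Lra List Classical ClassicalEpsilon.
From Stdlib Require Import Relations Relation_Operators.
Import ListNotations.
Open Scope R_scope.

(* A locally finite weighted graph on a vertex type V.
   w x y = weight of edge x~y (0 iff not adjacent); nbrs x enumerates
   (without repetition) the finitely many neighbours of x. *)
Record WGraph (V : Type) := {
  w : V -> V -> R;
  w_sym : forall x y, w x y = w y x;
  w_nonneg : forall x y, 0 <= w x y;
  nbrs : V -> list V;
  nbrs_nodup : forall x, NoDup (nbrs x);
  nbrs_spec : forall x y, In y (nbrs x) <-> 0 < w x y
}.
Arguments w {V} _ _ _.
Arguments nbrs {V} _ _.

Definition sumL {V : Type} (f : V -> R) (l : list V) : R :=
  fold_right Rplus 0 (map f l).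

Section G.
Context {V : Type} (G : WGraph V).

Definition adj (x y : V) : Prop := 0 < w G x y.

Definition connected : Prop :=
  forall x y : V, clos_refl_trans V adj x y.

Definition deg (x : V) : R := sumL (fun y => w G x y) (nbrs G x).

(* nu(A) for a finite set A given by a duplicate-free list *)
Definition nu (A : list V) : R := sumL deg A.

(* nu_G(V(G)) = s : the (possibly infinite) sum of the nonnegative family d,
   i.e. the supremum of its finite partial sums. *)
Definition total_measure_is (s : R) : Prop :=
  is_lub (fun r => exists l : list V, NoDup l /\ r = nu l) s.

Definition mx (x : V) (A : list V) : R := sumL (fun y => w G x y / deg x) A.

Definition in_bdry (Om : list V) (y : V) : Prop := ~ In y Om /\ 0 < mx y Om.

Definition V_eq_dec (x y : V) : {x = y} + {x <> y} :=
  excluded_middle_informative (x = y).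

(* duplicate-free enumeration of the (finite) boundary: every boundary vertex
   is a neighbour of a vertex of Omega. *)
Definition bdry_list (Om : list V) : list V :=
  nodup V_eq_dec
    (filter (fun y => if excluded_middle_informative (in_bdry Om y) then true else false)
            (flat_map (nbrs G) Om)).

Definition upsi (Om : list V) (u psi : V -> R) (y : V) : R :=
  if excluded_middle_informative (In y Om) then u y else psi y.

(* |t|^p, with the convention 0^p = 0 *)
Definition absp (t p : R) : R :=
  if Req_EM_T t 0 then 0 else Rpower (Rabs t) p.

(* q-Poincare inequality for (m^G, nu_G) in Omega.  Since Omega and its
   boundary are finite, L^q(Omega,nu) and L^q(d_m Omega,nu) consist of all
   real functions on these sets. *)
Definition poincare (q : R) (Om : list V) : Prop :=
  exists lam : R, 0 < lam /\
    forall u psi : V -> R,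
      lam * sumL (fun x => absp (u x) q * deg x) Om
      <= sumL (fun x =>
            (sumL (fun y =>
                 if excluded_middle_informative (In y Om \/ in_bdry Om y)
                 then absp (upsi Om u psi y - u x) q * (w G x y / deg x)
                 else 0) (nbrs G x)) * deg x) Om
         + sumL (fun y => absp (psi y) q * deg y) (bdry_list Om).

End G.

(* Connectedness and ν(Ω) < ν(V) give, for every x ∈ Ω, a path from x to a
   vertex outside Ω; its first vertex outside Ω lies in ∂_mΩ.  Walking back along
   the path and using |s - t|^p <= 2^p (|s|^p + |t|^p), |u(x)|^p is bounded by a
   constant times the edge terms |u(y) - u(y')|^p w_yy' and the boundary term
   |ψ(b)|^p d_b, each of which is at most the right-hand side of the inequality.
   As Ω is finite, one constant serves for all x ∈ Ω. *)

From Stdlib Require Import Reals List Lra Classical ClassicalEpsilon Relations.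
Open Scope R_scope.

Lemma sumL_nonneg {V : Type} (f : V -> R) (l : list V) :
  (forall z, In z l -> 0 <= f z) -> 0 <= sumL f l.
Proof.
  induction l as [|a l IH]; intros Hf; unfold sumL; simpl; [lra|].
  assert (0 <= f a) by (apply Hf; left; reflexivity).
  assert (0 <= sumL f l) by (apply IH; intros; apply Hf; right; assumption).
  unfold sumL in *; lra.
Qed.

Lemma sumL_In_le {V : Type} (f : V -> R) (l : list V) (a : V) :
  (forall z, In z l -> 0 <= f z) -> In a l -> f a <= sumL f l.
Proof.
  induction l as [|b l IH]; intros Hf Ha; [contradiction|].
  assert (Hl : forall z, In z l -> 0 <= f z) by (intros; apply Hf; right; assumption).
  unfold sumL; simpl; fold (sumL f l).
  destruct Ha as [<-|Ha].
  - pose proof (sumL_nonneg f l Hl); lra.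
  - assert (0 <= f b) by (apply Hf; left; reflexivity).
    pose proof (IH Hl Ha); lra.
Qed.

Lemma sumL_le {V : Type} (f g : V -> R) (l : list V) :
  (forall z, In z l -> f z <= g z) -> sumL f l <= sumL g l.
Proof.
  induction l as [|a l IH]; intros Hfg; unfold sumL; simpl; [lra|].
  assert (f a <= g a) by (apply Hfg; left; reflexivity).
  assert (sumL f l <= sumL g l) by (apply IH; intros; apply Hfg; right; assumption).
  unfold sumL in *; lra.
Qed.

Lemma sumL_scal_l {V : Type} (f : V -> R) (c : R) (l : list V) :
  sumL (fun x => c * f x) l = c * sumL f l.
Proof.
  induction l as [|a l IH]; unfold sumL in *; simpl; [ring|].
  rewrite IH; ring.
Qed.

Lemma sumL_app {V : Type} (f : V -> R) (l1 l2 : list V) :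
  sumL f (l1 ++ l2) = sumL f l1 + sumL f l2.
Proof.
  induction l1 as [|a l IH]; unfold sumL in *; simpl; [ring|].
  rewrite IH; ring.
Qed.

Lemma sumL_incl_le {V : Type} (f : V -> R) (l m : list V) :
  (forall z, 0 <= f z) -> NoDup l -> incl l m -> sumL f l <= sumL f m.
Proof.
  intros Hf Hl; revert m; induction Hl as [|a l Hal Hl IH]; intros m Hlm.
  - apply sumL_nonneg; auto.
  - destruct (in_split a m (Hlm a (in_eq a l))) as [m1 [m2 ->]].
    assert (Hl_m : incl l (m1 ++ m2)).
    { intros y Hy.
      destruct (in_app_or _ _ _ (Hlm y (in_cons a y l Hy))) as [H|[<-|H]];
        [apply in_or_app; left; assumption | contradiction
        | apply in_or_app; right; assumption]. }
    pose proof (IH _ Hl_m) as Hsum.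
    rewrite !sumL_app in *; unfold sumL in *; simpl; lra.
Qed.

Lemma absp_nonneg (t p : R) : 0 <= absp t p.
Proof.
  unfold absp; destruct Req_EM_T; [lra|].
  left; apply exp_pos.
Qed.

Lemma absp_le_compat (s t p : R) : 0 < p -> Rabs s <= Rabs t -> absp s p <= absp t p.
Proof.
  intros Hp Hst; unfold absp.
  destruct (Req_EM_T s 0) as [_|Hs]; [apply absp_nonneg|].
  pose proof (Rabs_pos_lt s Hs).
  destruct (Req_EM_T t 0) as [->|_]; [rewrite Rabs_R0 in Hst; lra|].
  apply Rle_Rpower_l; lra.
Qed.

Lemma absp_double (t p : R) : absp (2 * t) p = Rpower 2 p * absp t p.
Proof.
  unfold absp.
  destruct (Req_EM_T (2 * t) 0) as [H2t|H2t];
    destruct (Req_EM_T t 0) as [Ht|Ht]; try lra.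
  rewrite Rabs_mult, Rabs_pos_eq by lra.
  apply eq_sym, Rpower_mult_distr; [lra|apply Rabs_pos_lt; assumption].
Qed.

Lemma absp_sub_le (a b p : R) : 0 < p ->
  absp (a - b) p <= Rpower 2 p * (absp a p + absp b p).
Proof.
  intros Hp.
  assert (H2 : 0 < Rpower 2 p) by apply exp_pos.
  pose proof (absp_nonneg a p); pose proof (absp_nonneg b p).
  assert (Htri : Rabs (a - b) <= Rabs a + Rabs b).
  { unfold Rminus; rewrite <- (Rabs_Ropp b); apply Rabs_triang. }
  destruct (Rle_dec (Rabs b) (Rabs a)).
  - assert (absp (a - b) p <= absp (2 * a) p).
    { apply absp_le_compat; [assumption|]. rewrite Rabs_mult, (Rabs_pos_eq 2); lra. }
    rewrite absp_double in *; nra.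
  - assert (absp (a - b) p <= absp (2 * b) p).
    { apply absp_le_compat; [assumption|]. rewrite Rabs_mult, (Rabs_pos_eq 2); lra. }
    rewrite absp_double in *; nra.
Qed.

Section Graph.
Context {V : Type} (G : WGraph V).

Lemma deg_nonneg (x : V) : 0 <= deg G x.
Proof. apply sumL_nonneg; intros; apply w_nonneg. Qed.

Lemma deg_pos_of_adj (x y : V) : adj G x y -> 0 < deg G x.
Proof.
  intros Hxy.
  apply (Rlt_le_trans _ _ _ Hxy), (sumL_In_le (fun y => w G x y)).
  - intros; apply w_nonneg.
  - apply nbrs_spec; assumption.
Qed.

Lemma adj_sym (x y : V) : adj G x y -> adj G y x.
Proof. unfold adj; rewrite w_sym; auto. Qed.

Lemma in_bdry_of_adj (Om : list V) (x y : V) :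
  In x Om -> ~ In y Om -> adj G x y -> in_bdry G Om y.
Proof.
  intros Hx Hy Hxy; split; [assumption|].
  pose proof (deg_pos_of_adj y x (adj_sym x y Hxy)) as Hdy.
  apply (Rlt_le_trans _ (w G y x / deg G y)).
  - apply Rdiv_lt_0_compat; [apply adj_sym|]; assumption.
  - apply (sumL_In_le (fun z => w G y z / deg G y)); [|assumption].
    intros; apply Rle_mult_inv_pos; [apply w_nonneg | assumption].
Qed.

Lemma exists_notin_of_nu_lt (s : R) (Om : list V) :
  total_measure_is G s -> nu G Om < s -> exists z, ~ In z Om.
Proof.
  intros [_ Hleast] Hlt.
  apply NNPP; intros Hall.
  assert (s <= nu G Om); [|lra].
  apply Hleast; intros r [l [Hl ->]].
  apply sumL_incl_le; [apply deg_nonneg | assumption |].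
  intros y _; apply NNPP; intros Hy; apply Hall; exists y; assumption.
Qed.

Section Energy.
Variables (p : R) (Om : list V).
Hypothesis p_pos : 0 < p.

Definition edge_term (u psi : V -> R) (x y : V) : R :=
  if excluded_middle_informative (In y Om \/ in_bdry G Om y)
  then absp (upsi Om u psi y - u x) p * (w G x y / deg G x)
  else 0.

Definition energy (u psi : V -> R) : R :=
  sumL (fun x => sumL (edge_term u psi x) (nbrs G x) * deg G x) Om
  + sumL (fun y => absp (psi y) p * deg G y) (bdry_list G Om).

Lemma edge_term_nonneg (u psi : V -> R) (x y : V) :
  In y (nbrs G x) -> 0 <= edge_term u psi x y.
Proof.
  intros Hy; apply nbrs_spec in Hy.
  unfold edge_term; destruct excluded_middle_informative; [|lra].
  apply Rmult_le_pos; [apply absp_nonneg|].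
  apply Rle_mult_inv_pos; [apply w_nonneg | apply (deg_pos_of_adj x y Hy)].
Qed.

Lemma edge_sum_nonneg (u psi : V -> R) :
  forall x, In x Om -> 0 <= sumL (edge_term u psi x) (nbrs G x) * deg G x.
Proof.
  intros x _; apply Rmult_le_pos; [|apply deg_nonneg].
  apply sumL_nonneg; intros; apply edge_term_nonneg; assumption.
Qed.

Lemma bdry_sum_nonneg (psi : V -> R) :
  0 <= sumL (fun y => absp (psi y) p * deg G y) (bdry_list G Om).
Proof.
  apply sumL_nonneg; intros.
  apply Rmult_le_pos; [apply absp_nonneg | apply deg_nonneg].
Qed.

Lemma energy_nonneg (u psi : V -> R) : 0 <= energy u psi.
Proof.
  pose proof (sumL_nonneg _ Om (edge_sum_nonneg u psi)).
  pose proof (bdry_sum_nonneg psi).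
  unfold energy; lra.
Qed.

Lemma edge_le_energy (u psi : V -> R) (x y : V) :
  In x Om -> adj G x y -> In y Om \/ in_bdry G Om y ->
  absp (upsi Om u psi y - u x) p <= / w G x y * energy u psi.
Proof.
  intros Hx Hxy Hy.
  pose proof (deg_pos_of_adj x y Hxy) as Hdx.
  assert (Hterm : edge_term u psi x y * deg G x
                  <= sumL (fun x => sumL (edge_term u psi x) (nbrs G x) * deg G x) Om).
  { apply Rle_trans with (sumL (edge_term u psi x) (nbrs G x) * deg G x).
    - apply Rmult_le_compat_r; [apply deg_nonneg|].
      apply sumL_In_le; [intros; apply edge_term_nonneg; assumption|].
      apply nbrs_spec; assumption.
    - apply (sumL_In_le (fun x => sumL (edge_term u psi x) (nbrs G x) * deg G x));
        [apply edge_sum_nonneg | assumption]. }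
  assert (Hprod : edge_term u psi x y * deg G x = absp (upsi Om u psi y - u x) p * w G x y).
  { unfold edge_term; destruct excluded_middle_informative; [field; lra | contradiction]. }
  pose proof (bdry_sum_nonneg psi).
  apply (Rmult_le_reg_r (w G x y)); [assumption|].
  replace (/ w G x y * energy u psi * w G x y) with (energy u psi)
    by (field; unfold adj in Hxy; lra).
  unfold energy; lra.
Qed.

Lemma bdry_le_energy (u psi : V -> R) (x b : V) :
  In x Om -> adj G x b -> in_bdry G Om b ->
  absp (psi b) p <= / deg G b * energy u psi.
Proof.
  intros Hx Hxb Hb.
  pose proof (deg_pos_of_adj b x (adj_sym x b Hxb)) as Hdb.
  assert (Hterm : absp (psi b) p * deg G b
                  <= sumL (fun y => absp (psi y) p * deg G y) (bdry_list G Om)).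
  { apply (sumL_In_le (fun y => absp (psi y) p * deg G y)).
    - intros; apply Rmult_le_pos; [apply absp_nonneg | apply deg_nonneg].
    - apply nodup_In, filter_In; split.
      + apply in_flat_map; exists x; split; [assumption | apply nbrs_spec; assumption].
      + destruct excluded_middle_informative; [reflexivity | contradiction]. }
  pose proof (sumL_nonneg _ Om (edge_sum_nonneg u psi)).
  apply (Rmult_le_reg_r (deg G b)); [assumption|].
  replace (/ deg G b * energy u psi * deg G b) with (energy u psi) by (field; lra).
  unfold energy; lra.
Qed.

Definition energy_controlled (x : V) : Prop :=
  exists K, 0 < K /\ forall u psi, absp (u x) p <= K * energy u psi.

Lemma energy_controlled_of_bdry_nbr (x b : V) :
  In x Om -> adj G x b -> in_bdry G Om b -> energy_controlled x.
Proof.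
  intros Hx Hxb Hb.
  pose proof (deg_pos_of_adj b x (adj_sym x b Hxb)) as Hdb.
  assert (H2 : 0 < Rpower 2 p) by apply exp_pos.
  exists (Rpower 2 p * (/ deg G b + / w G x b)); split.
  { pose proof (Rinv_0_lt_compat _ Hdb); pose proof (Rinv_0_lt_compat _ Hxb); nra. }
  intros u psi.
  assert (Hub : upsi Om u psi b = psi b).
  { unfold upsi; destruct excluded_middle_informative; [destruct Hb; contradiction | reflexivity]. }
  pose proof (bdry_le_energy u psi x b Hx Hxb Hb).
  pose proof (edge_le_energy u psi x b Hx Hxb (or_intror Hb)).
  pose proof (absp_sub_le (psi b) (upsi Om u psi b - u x) p p_pos).
  replace (psi b - (upsi Om u psi b - u x)) with (u x) in * by (rewrite Hub; ring).
  pose proof (energy_nonneg u psi); nra.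
Qed.

Lemma energy_controlled_of_nbr (x y : V) :
  In x Om -> adj G x y -> In y Om -> energy_controlled y -> energy_controlled x.
Proof.
  intros Hx Hxy Hy [K [HK HuyK]].
  assert (H2 : 0 < Rpower 2 p) by apply exp_pos.
  exists (Rpower 2 p * (K + / w G x y)); split.
  { pose proof (Rinv_0_lt_compat _ Hxy); nra. }
  intros u psi.
  assert (Huy : upsi Om u psi y = u y).
  { unfold upsi; destruct excluded_middle_informative; [reflexivity | contradiction]. }
  pose proof (HuyK u psi).
  pose proof (edge_le_energy u psi x y Hx Hxy (or_introl Hy)).
  pose proof (absp_sub_le (u y) (upsi Om u psi y - u x) p p_pos).
  replace (u y - (upsi Om u psi y - u x)) with (u x) in * by (rewrite Huy; ring).
  pose proof (energy_nonneg u psi); nra.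
Qed.

Lemma energy_controlled_of_path (x z : V) :
  clos_refl_trans_1n V (adj G) x z -> ~ In z Om -> In x Om -> energy_controlled x.
Proof.
  induction 1 as [x|x y z Hxy Hyz IH]; intros Hz Hx; [contradiction|].
  destruct (classic (In y Om)) as [Hy|Hy].
  - apply (energy_controlled_of_nbr x y Hx Hxy Hy (IH Hz Hy)).
  - apply (energy_controlled_of_bdry_nbr x y Hx Hxy (in_bdry_of_adj Om x y Hx Hy Hxy)).
Qed.

Lemma energy_controlled_uniform (l : list V) :
  (forall x, In x l -> energy_controlled x) ->
  exists K, 0 < K /\ forall x, In x l -> forall u psi, absp (u x) p <= K * energy u psi.
Proof.
  induction l as [|a l IH]; intros Hl.
  - exists 1; split; [lra | intros x []].
  - destruct (Hl a (in_eq a l)) as [Ka [HKa Ha]].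
    destruct IH as [Kl [HKl Hl']]; [intros x Hx; apply Hl, in_cons, Hx|].
    exists (Ka + Kl); split; [lra|].
    intros x Hx u psi; pose proof (energy_nonneg u psi).
    destruct Hx as [<-|Hx]; [pose proof (Ha u psi) | pose proof (Hl' x Hx u psi)]; nra.
Qed.

Lemma poincare_of_uniform_bound (K : R) :
  0 < nu G Om -> 0 < K ->
  (forall x, In x Om -> forall u psi, absp (u x) p <= K * energy u psi) ->
  poincare G p Om.
Proof.
  intros Hnu HK Hbound.
  exists (/ (K * nu G Om)); split; [apply Rinv_0_lt_compat; nra|].
  intros u psi; change (/ (K * nu G Om) * sumL (fun x => absp (u x) p * deg G x) Om
                        <= energy u psi).
  assert (Hsum : sumL (fun x => absp (u x) p * deg G x) Om <= K * energy u psi * nu G Om).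
  { unfold nu; rewrite <- sumL_scal_l.
    apply sumL_le; intros x Hx.
    apply Rmult_le_compat_r; [apply deg_nonneg | apply Hbound; assumption]. }
  apply (Rmult_le_reg_l (K * nu G Om)); [nra|].
  rewrite <- Rmult_assoc, Rinv_r by nra.
  lra.
Qed.

End Energy.
End Graph.

Theorem mainTheorem13 (V : Type) (G : WGraph V) (nuV : R)
  (Hconn : connected G) (Htot : total_measure_is G nuV)
  (Om : list V) (HOm : NoDup Om)
  (Hpos : 0 < nu G Om) (Hlt : nu G Om < nuV) :
  forall p : R, 1 <= p -> poincare G p Om.
Proof.
  intros p Hp; assert (Hp0 : 0 < p) by lra.
  destruct (exists_notin_of_nu_lt G nuV Om Htot Hlt) as [z Hz].
  destruct (energy_controlled_uniform G p Om Om) as [K [HK Hbound]].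
  { intros x Hx.
    apply (energy_controlled_of_path G p Om Hp0 x z); [|assumption..].
    apply clos_rt_rt1n, Hconn. }
  exact (poincare_of_uniform_bound G p Om K Hpos HK Hbound).
Qed.
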